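(* Let $k\ge 2$ and let $G$ be a finite simple graph admitting a closed neighborhood balanced $k$-coloring $c$ with color classes $V_1,\dots,V_k$. If $|V_i|=|V_j|$ for some $i,j$, then $|E(V_i,V_i)|=|E(V_j,V_j)|$.
   Context: For a vertex $v$, $N[v]=\{v\}\cup\{u : uv\in E(G)\}$. A closed neighborhood balanced $k$-coloring of $G$ is a map $c: V(G)\to\{1,\dots,k\}$ such that for every vertex $v$ the numbers $|\{u\in N[v] : c(u)=i\}|$, $i=1,\dots,k$, are all equal; its color classes are $V_i=c^{-1}(i)$. $E(X,X)$ denotes the set of edges with both endpoints in $X$. *)

From mathcomp Require Import all_boot.
Set Implicit Arguments. Unset Strict Implicit. Unset Printing Implicit Defensive.

Definition simple_graph (T : finType) (e : rel T) : Prop :=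
  symmetric e /\ irreflexive e.

Definition closed_nbhd (T : finType) (e : rel T) (v : T) : {set T} :=
  [set u | (u == v) || e v u].

(* Closed neighborhood balanced k-coloring c : T -> 'I_k (colors 1..k as 0..k-1). *)
Definition cnb_coloring (T : finType) (e : rel T) (k : nat) (c : T -> 'I_k) : Prop :=
  forall (v : T) (i j : 'I_k),
    #|[set u in closed_nbhd e v | c u == i]| = #|[set u in closed_nbhd e v | c u == j]|.

Definition color_class (T : finType) (k : nat) (c : T -> 'I_k) (i : 'I_k) : {set T} :=
  [set v | c v == i].

Definition edges_in (T : finType) (e : rel T) (X : {set T}) : {set {set T}} :=
  [set S : {set T} | [exists u in X, exists w in X, e u w && (S == [set u; w])]].

From mathcomp Require Import all_boot.

(* Balance forces |N[v] ∩ V_x| = |N[v]|/k for every vertex v and colour x.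
   Counting the pairs (u, v) with u ∈ N[v] ∩ V_x in two ways gives
   Σ_v |N[v] ∩ V_x| = Σ_(u ∈ V_x) |N[u]| = k · Σ_(u ∈ V_x) |N[u] ∩ V_x|,
   and the left-hand side equals Σ_v |N[v]|/k, independently of x. So
   Σ_(u ∈ V_x) |N[u] ∩ V_x| is the same for all colours, and by the handshake
   lemma inside V_x it is |V_x| + 2|E(V_x, V_x)|. *)

Lemma double_count (I J : finType) (A : {pred I}) (B : {pred J}) (r : I -> J -> bool) :
  \sum_(i in A) #|[set j in B | r i j]| = \sum_(j in B) #|[set i in A | r i j]|.
Proof.
have card_sep (K : finType) (C : {pred K}) (p : pred K) :
    #|[set x in C | p x]| = \sum_(x in C) p x.
  rewrite -sum1_card (eq_bigl (fun x => (x \in C) && p x)) => [|x]; last by rewrite inE.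
  by rewrite big_mkcondr; apply: eq_bigr => x _; case: (p x).
under eq_bigr do rewrite card_sep.
by rewrite exchange_big; apply: eq_bigr => j _; rewrite card_sep.
Qed.

Lemma card_partition_fun {T : finType} {k : nat} (c : T -> 'I_k) (A : {set T}) :
  #|A| = \sum_(x < k) #|[set u in A | c u == x]|.
Proof.
rewrite -sum1_card (partition_big c xpredT) //=.
by apply: eq_bigr => x _; rewrite -sum1_card; apply: eq_bigl => u; rewrite !inE.
Qed.

Section SimpleGraph.
Variables (T : finType) (e : rel T).
Hypothesis e_sym : symmetric e.

Lemma closed_nbhdC u v : (u \in closed_nbhd e v) = (v \in closed_nbhd e u).
Proof. by rewrite !inE eq_sym e_sym. Qed.

Lemma sum_card_nbhdI (A : {set T}) :
  \sum_v #|closed_nbhd e v :&: A| = \sum_(u in A) #|closed_nbhd e u|.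
Proof.
have nbhdI v : closed_nbhd e v :&: A = [set u in A | u \in closed_nbhd e v].
  by apply/setP => u; rewrite !inE andbC.
under eq_bigr do rewrite nbhdI.
rewrite double_count; apply: eq_bigr => u _.
by apply: eq_card => v; rewrite inE closed_nbhdC.
Qed.

Lemma edges_inP (X : {set T}) (S : {set T}) :
  reflect (exists u w, [/\ u \in X, w \in X, e u w & S = [set u; w]])
          (S \in edges_in e X).
Proof.
apply: (iffP idP).
  by rewrite inE => /exists_inP [u uX /exists_inP [w wX /andP [euw /eqP ->]]]; exists u, w.
case=> u [w [uX wX euw ->]]; rewrite inE; apply/exists_inP; exists u => //.
by apply/exists_inP; exists w; rewrite ?euw ?eqxx.
Qed.

Lemma edges_in_sub {X S : {set T}} : S \in edges_in e X -> S \subset X.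
Proof.
by case/edges_inP => u [w [uX wX _ ->]]; apply/subsetP => v; rewrite !inE => /orP [] /eqP ->.
Qed.

Lemma edges_in_at (X : {set T}) v :
  v \in X -> [set S in edges_in e X | v \in S] = [set [set v; u] | u in [set u in X | e v u]].
Proof.
move=> vX; apply/setP => S; rewrite inE; apply/andP/imsetP.
  case=> /edges_inP [a [b [aX bX eab ->]]]; rewrite !inE => /orP [] /eqP ->.
    by exists b; rewrite ?inE ?bX.
  by exists a; [rewrite inE aX e_sym | rewrite setUC].
case=> u; rewrite inE => /andP [uX evu] ->; split; last by rewrite !inE eqxx.
by apply/edges_inP; exists v, u.
Qed.

Hypothesis e_irr : irreflexive e.

Lemma card_edges_in_mem {X S : {set T}} : S \in edges_in e X -> #|S| = 2.
Proof.
by case/edges_inP => u [w [_ _ euw ->]]; rewrite cards2; case: eqVneq euw => // ->; rewrite e_irr.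
Qed.

Lemma card_edges_in_at (X : {set T}) v :
  v \in X -> #|[set S in edges_in e X | v \in S]| = #|[set u in X | e v u]|.
Proof.
move=> vX; rewrite edges_in_at // card_in_imset // => u w.
rewrite !inE => /andP [_ evu] /andP [_ evw] uw.
have : w \in [set v; u] by rewrite uw !inE eqxx orbT.
by rewrite !inE => /orP [] /eqP // wv; rewrite wv e_irr in evw.
Qed.

Lemma handshake_in (X : {set T}) :
  \sum_(v in X) #|[set u in X | e v u]| = 2 * #|edges_in e X|.
Proof.
under eq_bigr => v vX do rewrite -card_edges_in_at //.
rewrite double_count mulnC -sum_nat_const; apply: eq_bigr => S SE.
rewrite -(card_edges_in_mem SE); apply: eq_card => v; rewrite inE andb_idl //.
exact: (subsetP (edges_in_sub SE)).
Qed.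

Lemma sum_card_nbhdI_self (X : {set T}) :
  \sum_(u in X) #|closed_nbhd e u :&: X| = #|X| + 2 * #|edges_in e X|.
Proof.
rewrite -handshake_in -sum1_card -big_split /=; apply: eq_bigr => u uX.
have -> : closed_nbhd e u :&: X = u |: [set w in X | e u w].
  by apply/setP => w; rewrite !inE; case: eqVneq => [->|_] /=; [rewrite uX | exact: andbC].
by rewrite cardsU1 inE e_irr andbF.
Qed.

Section BalancedColoring.
Variables (k : nat) (c : T -> 'I_k).
Hypothesis c_balanced : cnb_coloring e c.

Lemma nbhd_classE v x :
  [set u in closed_nbhd e v | c u == x] = closed_nbhd e v :&: color_class c x.
Proof. by apply/setP => u; rewrite !inE. Qed.

Lemma card_nbhd_class v x :
  #|closed_nbhd e v| = k * #|closed_nbhd e v :&: color_class c x|.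
Proof.
rewrite (card_partition_fun c).
under eq_bigr => y _ do rewrite (c_balanced v y x) nbhd_classE.
by rewrite sum_nat_const card_ord.
Qed.

Lemma sum_card_nbhdI_class_const x y : 0 < k ->
  \sum_(u in color_class c x) #|closed_nbhd e u :&: color_class c x| =
  \sum_(u in color_class c y) #|closed_nbhd e u :&: color_class c y|.
Proof.
move=> k_gt0; apply/eqP; rewrite -(eqn_pmul2l k_gt0); apply/eqP.
have count_class z : k * \sum_(u in color_class c z) #|closed_nbhd e u :&: color_class c z| =
    \sum_v #|closed_nbhd e v :&: color_class c x|.
  rewrite big_distrr /=.
  under eq_bigr do rewrite -card_nbhd_class.
  rewrite -sum_card_nbhdI; apply: eq_bigr => v _.
  by rewrite -!nbhd_classE (c_balanced v z x).
by rewrite !count_class.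
Qed.

End BalancedColoring.

End SimpleGraph.

Theorem corollary2p9 (k : nat) (T : finType) (e : rel T) (c : T -> 'I_k) :
  2 <= k ->
  simple_graph e ->
  cnb_coloring e c ->
  forall i j : 'I_k,
    #|color_class c i| = #|color_class c j| ->
    #|edges_in e (color_class c i)| = #|edges_in e (color_class c j)|.
Proof.
move=> k_ge2 [e_sym e_irr] c_balanced i j card_ij.
have := @sum_card_nbhdI_class_const _ _ e_sym _ _ c_balanced i j (ltnW k_ge2).
rewrite !sum_card_nbhdI_self // card_ij => /eqP.
by rewrite eqn_add2l eqn_mul2l => /eqP.
Qed.
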